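(* Let $X$ and $Y$ be terms in normal form and let $f$ be a binary constructor (one of $\mathsf{sign},\mathsf{blind},\langle\cdot,\cdot\rangle,\{\cdot\}_\cdot$). If $\Gamma,f(X,Y)\vdash M$ has a cut-free derivation in $\mathcal S$, then so does $\Gamma,X,Y\vdash M$.
   Context: Fix names, variables and constructors $\mathsf{pub}$ (unary), $\mathsf{sign},\mathsf{blind},\langle\cdot,\cdot\rangle,\{\cdot\}_\cdot$ (binary). $E$ is the union of AC-convergent equational theories $E_1,\dots,E_n$ with pairwise disjoint signatures, disjoint from the constructors, each with at most one associative-commutative (AC) binary symbol $\oplus_i$; $E$ is presented by a rewrite system $R_E$ terminating and confluent modulo AC; $\Sigma_E$ is its signature. Terms are ground terms over names, the constructors and $\Sigma_E$; normal form means $R_E$-normal form modulo AC. $\equiv$ is equality modulo AC of all $\oplus_i$; $\approx_E$ equality modulo $E$. Guarded term: a name, a variable, or headed by a constructor. $E$-context: term with holes built only from symbols of $\Sigma_E$. Sequents $\Gamma\vdash M$ have all terms in normal form; $\Gamma,M$ means $\Gamma\cup\{M\}$. A derivation is cut-free if it has no instance of (cut). System $\mathcal S$: (id) $\Gamma\vdash M$ with no premise if $M\approx_E C[M_1,\dots,M_k]$ for an $E$-context $C$ and $M_i\in\Gamma$; (cut) from $\Gamma\vdash M$, $\Gamma,M\vdash T$ infer $\Gamma\vdash T$; ($p_L$) from $\Gamma,\langle M,N\rangle,M,N\vdash T$ infer $\Gamma,\langle M,N\rangle\vdash T$; ($p_R$) from $\Gamma\vdash M,\Gamma\vdash N$ infer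 $\Gamma\vdash\langle M,N\rangle$; ($e_L$) from $\Gamma,\{M\}_K\vdash K$ and $\Gamma,\{M\}_K,M,K\vdash N$ infer $\Gamma,\{M\}_K\vdash N$; ($e_R$) from $\Gamma\vdash M,\Gamma\vdash K$ infer $\Gamma\vdash\{M\}_K$; ($\mathsf{sign}_L$) from $\Gamma,\mathsf{sign}(M,K),\mathsf{pub}(L),M\vdash N$ infer $\Gamma,\mathsf{sign}(M,K),\mathsf{pub}(L)\vdash N$ if $K\equiv L$; ($\mathsf{sign}_R$) from $\Gamma\vdash M,\Gamma\vdash K$ infer $\Gamma\vdash\mathsf{sign}(M,K)$; ($\mathsf{blind}_{L1}$) from $\Gamma,\mathsf{blind}(M,K)\vdash K$ and $\Gamma,\mathsf{blind}(M,K),M,K\vdash N$ infer $\Gamma,\mathsf{blind}(M,K)\vdash N$; ($\mathsf{blind}_R$) from $\Gamma\vdash M,\Gamma\vdash K$ infer $\Gamma\vdash\mathsf{blind}(M,K)$; ($\mathsf{blind}_{L2}$) from $\Gamma,\mathsf{sign}(\mathsf{blind}(M,R),K)\vdash R$ and $\Gamma,\mathsf{sign}(\mathsf{blind}(M,R),K),\mathsf{sign}(M,K),R\vdash N$ infer $\Gamma,\mathsf{sign}(\mathsf{blind}(M,R),K)\vdash N$; ($gs$) from $\Gamma\vdash A$, $\Gamma,A\vdash M$ infer $\Gamma\vdash M$ if $A$ is a guarded subterm of a term in $\Gamma\cup\{M\}$. *)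

(* Sequent system S for Dolev-Yao deduction with blind
   signatures, modulo an equational theory E = E_1 u ... u E_n presented
   by a rewrite system R_E that is terminating and confluent modulo AC. *)
From Stdlib Require Import List Relations.
Import ListNotations.

Inductive term (S : Type) : Type :=
| Nm (a : nat)
| Vr (x : nat)                       (* variables (rules, contexts) *)
| Pub (t : term S)
| Sign (m k : term S)
| Blind (m k : term S)
| Pair (m n : term S)
| Enc (m k : term S)
| App (f : S) (args : list (term S)).

Arguments Nm {S}. Arguments Vr {S}. Arguments Pub {S}. Arguments Sign {S}.
Arguments Blind {S}. Arguments Pair {S}. Arguments Enc {S}. Arguments App {S}.

Inductive bcons := BSign | BBlind | BPair | BEnc.

Definition bapp {S} (f : bcons) (x y : term S) : term S :=
  match f with
  | BSign => Sign x y | BBlind => Blind x y | BPair => Pair x y | BEnc => Enc x y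
  end.

Fixpoint subst {S} (s : nat -> term S) (t : term S) : term S :=
  match t with
  | Nm a => Nm a
  | Vr x => s x
  | Pub u => Pub (subst s u)
  | Sign u v => Sign (subst s u) (subst s v)
  | Blind u v => Blind (subst s u) (subst s v)
  | Pair u v => Pair (subst s u) (subst s v)
  | Enc u v => Enc (subst s u) (subst s v)
  | App f l => App f (map (subst s) l)
  end.

Inductive occurs {S} (x : nat) : term S -> Prop :=
| oc_var : occurs x (Vr x)
| oc_pub t : occurs x t -> occurs x (Pub t)
| oc_sign1 t u : occurs x t -> occurs x (Sign t u)
| oc_sign2 t u : occurs x u -> occurs x (Sign t u)
| oc_blind1 t u : occurs x t -> occurs x (Blind t u)
| oc_blind2 t u : occurs x u -> occurs x (Blind t u)
| oc_pair1 t u : occurs x t -> occurs x (Pair t u)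
| oc_pair2 t u : occurs x u -> occurs x (Pair t u)
| oc_enc1 t u : occurs x t -> occurs x (Enc t u)
| oc_enc2 t u : occurs x u -> occurs x (Enc t u)
| oc_app f l t : In t l -> occurs x t -> occurs x (App f l).

Definition ground {S} (t : term S) : Prop := forall x, ~ occurs x t.

Inductive subterm {S} (a : term S) : term S -> Prop :=
| st_refl : subterm a a
| st_pub t : subterm a t -> subterm a (Pub t)
| st_sign1 t u : subterm a t -> subterm a (Sign t u)
| st_sign2 t u : subterm a u -> subterm a (Sign t u)
| st_blind1 t u : subterm a t -> subterm a (Blind t u)
| st_blind2 t u : subterm a u -> subterm a (Blind t u)
| st_pair1 t u : subterm a t -> subterm a (Pair t u)
| st_pair2 t u : subterm a u -> subterm a (Pair t u)
| st_enc1 t u : subterm a t -> subterm a (Enc t u)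
| st_enc2 t u : subterm a u -> subterm a (Enc t u)
| st_app f l t : In t l -> subterm a t -> subterm a (App f l).

Definition guarded {S} (t : term S) : Prop :=
  match t with App _ _ => False | _ => True end.

Inductive ctxc {S} (r : relation (term S)) : relation (term S) :=
| cc_base t s : r t s -> ctxc r t s
| cc_pub t s : ctxc r t s -> ctxc r (Pub t) (Pub s)
| cc_sign1 t s u : ctxc r t s -> ctxc r (Sign t u) (Sign s u)
| cc_sign2 t s u : ctxc r t s -> ctxc r (Sign u t) (Sign u s)
| cc_blind1 t s u : ctxc r t s -> ctxc r (Blind t u) (Blind s u)
| cc_blind2 t s u : ctxc r t s -> ctxc r (Blind u t) (Blind u s)
| cc_pair1 t s u : ctxc r t s -> ctxc r (Pair t u) (Pair s u)
| cc_pair2 t s u : ctxc r t s -> ctxc r (Pair u t) (Pair u s)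
| cc_enc1 t s u : ctxc r t s -> ctxc r (Enc t u) (Enc s u)
| cc_enc2 t s u : ctxc r t s -> ctxc r (Enc u t) (Enc u s)
| cc_app f l1 l2 t s : ctxc r t s -> ctxc r (App f (l1 ++ t :: l2)) (App f (l1 ++ s :: l2)).

Record Etheory := {
  sym  : Type;
  ar   : sym -> nat;
  th   : sym -> nat;                  (* f belongs to the signature of E_(th f) *)
  isAC : sym -> Prop;
  rules : list (term sym * term sym)
}.

Section E.
Variable E : Etheory.
Notation T := (term (sym E)).

Inductive wf : T -> Prop :=
| wf_nm a : wf (Nm a)
| wf_vr x : wf (Vr x)
| wf_pub t : wf t -> wf (Pub t)
| wf_sign t u : wf t -> wf u -> wf (Sign t u)
| wf_blind t u : wf t -> wf u -> wf (Blind t u)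
| wf_pair t u : wf t -> wf u -> wf (Pair t u)
| wf_enc t u : wf t -> wf u -> wf (Enc t u)
| wf_app f l : length l = ar E f -> Forall wf l -> wf (App f l).

Inductive eterm (P : nat -> Prop) : T -> Prop :=
| et_vr x : eterm P (Vr x)
| et_app f l : P (th E f) -> Forall (eterm P) l -> eterm P (App f l).

(* E-context: built only from symbols of Sigma_E, holes being variables *)
Definition ectx (C : T) : Prop := wf C /\ eterm (fun _ => True) C.

Inductive acroot : relation T :=
| ac_assoc f x y z : isAC E f ->
    acroot (App f [App f [x; y]; z]) (App f [x; App f [y; z]])
| ac_assoc' f x y z : isAC E f ->
    acroot (App f [x; App f [y; z]]) (App f [App f [x; y]; z])
| ac_comm f x y : isAC E f -> acroot (App f [x; y]) (App f [y; x]).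

Definition aceq : relation T := clos_refl_sym_trans T (ctxc acroot).

Definition rroot (t s : T) : Prop :=
  exists l r (sg : nat -> T), In (l, r) (rules E) /\ t = subst sg l /\ s = subst sg r.

Definition rstep : relation T := ctxc rroot.

Definition rmod (t s : T) : Prop :=
  exists t' s', aceq t t' /\ rstep t' s' /\ aceq s' s.

Definition normal (t : T) : Prop := ~ exists s, rmod t s.

Definition eqE : relation T :=
  clos_refl_sym_trans T (fun t s => rstep t s \/ ctxc acroot t s).

End E.

Arguments wf {E}. Arguments ectx {E}. Arguments aceq {E}. Arguments rmod {E}.
Arguments normal {E}. Arguments eqE {E}.

Definition E_ok (E : Etheory) : Prop :=
  (forall f, isAC E f -> ar E f = 2) /\
  (forall f g, isAC E f -> isAC E g -> th E f = th E g -> f = g) /\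
  (* R_E is the union of rewrite systems for the E_i: every rule is
     built from variables and the symbols of a single E_i, is
     well-formed, its left side is not a variable, and its right side
     has no new variables *)
  (forall l r, In (l, r) (rules E) ->
     (exists i, eterm E (fun j => j = i) l /\ eterm E (fun j => j = i) r) /\
     wf l /\ wf r /\ (forall x, l <> Vr x) /\
     (forall x, occurs x r -> occurs x l)) /\
  (forall t : term (sym E), wf t -> Acc (fun s u => rmod u s) t) /\
  (forall t s1 s2 : term (sym E), wf t ->
     clos_refl_trans _ rmod t s1 -> clos_refl_trans _ rmod t s2 ->
     exists u1 u2, clos_refl_trans _ rmod s1 u1 /\
                   clos_refl_trans _ rmod s2 u2 /\ aceq u1 u2).

Section Seq.
Variable E : Etheory.
Notation T := (term (sym E)).

Definition okterm (t : T) : Prop := ground t /\ wf t /\ normal t.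
Definition wfseq (G : list T) (M : T) : Prop := Forall okterm G /\ okterm M.

(* Contexts Gamma are finite sets represented by lists; "Gamma, M" is
   M :: Gamma.  A rule whose conclusion is "Gamma, P |- N" is stated for
   any list containing P.  [der cut G M]: G |- M is derivable, using
   (cut) only if [cut = true]. *)
Inductive der (cut : bool) : list T -> T -> Prop :=
| d_id G M : wfseq G M ->
    (exists (C : T) (sg : nat -> T), ectx C /\
        (forall x, occurs x C -> In (sg x) G) /\ eqE M (subst sg C)) ->
    der cut G M
| d_cut G M N : cut = true -> wfseq G N ->
    der cut G M -> der cut (M :: G) N -> der cut G N
| d_pL G M N P : wfseq G P -> In (Pair M N) G ->
    der cut (M :: N :: G) P -> der cut G P
| d_pR G M N : wfseq G (Pair M N) ->
    der cut G M -> der cut G N -> der cut G (Pair M N)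
| d_eL G M K N : wfseq G N -> In (Enc M K) G ->
    der cut G K -> der cut (M :: K :: G) N -> der cut G N
| d_eR G M K : wfseq G (Enc M K) ->
    der cut G M -> der cut G K -> der cut G (Enc M K)
| d_signL G M K L N : wfseq G N -> In (Sign M K) G -> In (Pub L) G ->
    aceq K L -> der cut (M :: G) N -> der cut G N
| d_signR G M K : wfseq G (Sign M K) ->
    der cut G M -> der cut G K -> der cut G (Sign M K)
| d_blindL1 G M K N : wfseq G N -> In (Blind M K) G ->
    der cut G K -> der cut (M :: K :: G) N -> der cut G N
| d_blindR G M K : wfseq G (Blind M K) ->
    der cut G M -> der cut G K -> der cut G (Blind M K)
| d_blindL2 G M R K N : wfseq G N -> In (Sign (Blind M R) K) G ->
    der cut G R -> der cut (Sign M K :: R :: G) N -> der cut G N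
| d_gs G A M : wfseq G M -> guarded A ->
    (exists B, (In B G \/ B = M) /\ subterm A B) ->
    der cut G A -> der cut (A :: G) M -> der cut G M.

Definition cf_derivable (G : list T) (M : T) : Prop := der false G M.

End Seq.

Arguments cf_derivable {E}.

From Stdlib Require Import List Relations ClassicalEpsilon Lia.
Import ListNotations.

(* A context D covers G when every hypothesis of G is in D or is some f(X, Y) with X
   and Y in D; a cut-free derivation from G is then rebuilt from D.  A left rule on a
   covered hypothesis is superfluous, its components being in D already, and (gs) on a
   subterm of it becomes (gs) on a subterm of X or Y.  The delicate rule is (id), whose
   E-context may use covered hypotheses.  Since R_E and AC only involve Sigma_E,
   replacing all guarded subterms E-equal to given terms by a fixed term preserves
   E-equality, so the covered hypotheses can be replaced by a member of D -- unless
   some guarded subterm A of D or M is E-equal to a covered f(X, Y).  Both being in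
   normal form, A is then AC-equal to it by confluence, so A = f(A1, A2) with A1 =E X
   and A2 =E Y, and (gs) first adds A to D. *)

Definition term_nested_ind {S : Type} (P : term S -> Prop)
  (Hnm : forall a, P (Nm a)) (Hvr : forall x, P (Vr x))
  (Hpub : forall t, P t -> P (Pub t))
  (Hsign : forall t u, P t -> P u -> P (Sign t u))
  (Hblind : forall t u, P t -> P u -> P (Blind t u))
  (Hpair : forall t u, P t -> P u -> P (Pair t u))
  (Henc : forall t u, P t -> P u -> P (Enc t u))
  (Happ : forall f l, Forall P l -> P (App f l)) : forall t, P t :=
  fix F t := match t with
  | Nm a => Hnm a | Vr x => Hvr x | Pub u => Hpub u (F u)
  | Sign u v => Hsign u v (F u) (F v) | Blind u v => Hblind u v (F u) (F v)
  | Pair u v => Hpair u v (F u) (F v) | Enc u v => Henc u v (F u) (F v)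
  | App f l => Happ f l ((fix G l := match l return Forall P l with
       | [] => Forall_nil _ | x :: l' => Forall_cons _ (F x) (G l') end) l)
  end.

Ltac ctxc_ctor tac := first
  [ apply cc_pub; tac | apply cc_sign1; tac | apply cc_sign2; tac | apply cc_blind1; tac
  | apply cc_blind2; tac | apply cc_pair1; tac | apply cc_pair2; tac | apply cc_enc1; tac
  | apply cc_enc2; tac | apply cc_app; tac ].

Section ContextClosure.
Variable S : Type.
Notation T := (term S).

Lemma ctxc_idem (r : relation T) s t : ctxc (ctxc r) s t -> ctxc r s t.
Proof. induction 1; [assumption | ..]; ctxc_ctor assumption. Qed.

Lemma ctxc_or (r1 r2 : relation T) s t :
  ctxc (fun a b => ctxc r1 a b \/ ctxc r2 a b) s t -> ctxc r1 s t \/ ctxc r2 s t.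
Proof.
  induction 1; [assumption | ..];
    (destruct IHctxc; [left | right]; ctxc_ctor assumption).
Qed.

Lemma crst_congr (R : relation T) :
  (forall s t, ctxc R s t -> R s t) ->
  forall s t, ctxc (clos_refl_sym_trans T R) s t -> clos_refl_sym_trans T R s t.
Proof.
  intros HR s t H; induction H; [assumption | ..];
    (clear H; induction IHctxc;
     [ apply rst_step, HR; ctxc_ctor ltac:(apply cc_base; assumption)
     | apply rst_refl | apply rst_sym; assumption | eapply rst_trans; eassumption ]).
Qed.

End ContextClosure.

Section Congruence.
Variable E : Etheory.
Notation T := (term (sym E)).

Lemma eqE_congr (s t : T) : ctxc eqE s t -> eqE s t.
Proof. apply crst_congr; intros a b H; exact (ctxc_or _ _ _ _ _ H). Qed.

Lemma aceq_congr (s t : T) : ctxc aceq s t -> aceq s t.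
Proof. apply crst_congr, ctxc_idem. Qed.

Lemma aceq_eqE (s t : T) : aceq s t -> eqE s t.
Proof.
  induction 1; [apply rst_step; right; assumption | apply rst_refl
  | apply rst_sym; assumption | eapply rst_trans; eassumption].
Qed.

Lemma rmod_congr (s t : T) : ctxc rmod s t -> rmod s t.
Proof.
  induction 1; [assumption | ..];
    (destruct IHctxc as (t' & s' & Ht & Hstep & Hs); do 2 eexists; split; [|split];
     [ apply aceq_congr; ctxc_ctor ltac:(apply cc_base; exact Ht)
     | ctxc_ctor ltac:(exact Hstep)
     | apply aceq_congr; ctxc_ctor ltac:(apply cc_base; exact Hs) ]).
Qed.

Lemma eqE_bapp f (a a' b b' : T) :
  eqE a a' -> eqE b b' -> eqE (bapp f a b) (bapp f a' b').
Proof.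
  intros Ha Hb; apply rst_trans with (bapp f a' b);
    destruct f; apply eqE_congr; ctxc_ctor ltac:(apply cc_base; assumption).
Qed.

Lemma eqE_app f (l l' : list T) : Forall2 eqE l l' -> eqE (App f l) (App f l').
Proof.
  intros H; change l with ([] ++ l); change l' with ([] ++ l'); generalize (@nil T).
  induction H as [|x y l l' Hxy _ IH]; intros pre; [apply rst_refl|].
  apply rst_trans with (App f (pre ++ y :: l)).
  - apply eqE_congr, cc_app, cc_base, Hxy.
  - specialize (IH (pre ++ [y])); rewrite <- !app_assoc in IH; exact IH.
Qed.

Lemma eqE_subst (s1 s2 : nat -> T) :
  (forall x, eqE (s1 x) (s2 x)) -> forall C, eqE (subst s1 C) (subst s2 C).
Proof.
  intros Hs C; induction C using term_nested_ind; cbn; try apply rst_refl.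
  - auto.
  - apply eqE_congr, cc_pub, cc_base; assumption.
  - apply (eqE_bapp BSign); assumption.
  - apply (eqE_bapp BBlind); assumption.
  - apply (eqE_bapp BPair); assumption.
  - apply (eqE_bapp BEnc); assumption.
  - apply eqE_app; induction H; constructor; assumption.
Qed.

End Congruence.

Section Subterms.
Variable E : Etheory.
Notation T := (term (sym E)).

Lemma subterm_occurs (A B : T) x : subterm A B -> occurs x A -> occurs x B.
Proof. induction 1; intros; [assumption | ..]; solve [econstructor; eauto]. Qed.

Lemma subterm_wf (A B : T) : subterm A B -> wf B -> wf A.
Proof.
  induction 1; intros Hw; inversion Hw; subst; auto.
  apply IHsubterm; rewrite Forall_forall in *; auto.
Qed.

Lemma subterm_normal (A B : T) : subterm A B -> normal B -> normal A.
Proof.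
  induction 1 as [| | | | | | | | | | f l t Hin _ IH]; intros HB; [assumption | ..];
    (apply IHsubterm || apply IH); intros [s' Hs]; apply HB.
  all: try (eexists; apply rmod_congr; ctxc_ctor ltac:(apply cc_base; exact Hs)).
  destruct (in_split _ _ Hin) as (l1 & l2 & ->).
  eexists; apply rmod_congr, cc_app, cc_base, Hs.
Qed.

Lemma subterm_okterm (A B : T) : subterm A B -> okterm E B -> okterm E A.
Proof.
  intros H (Hg & Hw & Hn); split; [|split].
  - intros x Hx; eapply Hg, subterm_occurs; eassumption.
  - eapply subterm_wf; eassumption.
  - eapply subterm_normal; eassumption.
Qed.

Lemma subterm_bapp_inv f (A X Y : T) :
  subterm A (bapp f X Y) -> A = bapp f X Y \/ subterm A X \/ subterm A Y.
Proof. destruct f; inversion 1; auto. Qed.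

Lemma okterm_bapp f (X Y : T) : okterm E (bapp f X Y) -> okterm E X /\ okterm E Y.
Proof.
  intros H; split; eapply subterm_okterm; try exact H; destruct f; do 2 constructor.
Qed.

End Subterms.

Section NormalForms.
Variable E : Etheory.
Hypothesis HE : E_ok E.
Notation T := (term (sym E)).

(* Confluence is only assumed for well-formed terms, while an E-conversion may pass
   through ill-formed ones; [clean] projects the whole conversion onto well-formed
   terms by replacing every application of wrong arity with a name. *)
Fixpoint clean (t : T) : T :=
  match t with
  | App f l => if Nat.eqb (length l) (ar E f) then App f (map clean l) else Nm 0
  | Pub u => Pub (clean u)
  | Sign u v => Sign (clean u) (clean v)
  | Blind u v => Blind (clean u) (clean v)
  | Pair u v => Pair (clean u) (clean v)
  | Enc u v => Enc (clean u) (clean v)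
  | t => t
  end.

Lemma wf_clean (t : T) : wf (clean t).
Proof.
  induction t using term_nested_ind; cbn; try constructor; auto.
  destruct (Nat.eqb (length l) (ar E f)) eqn:Hl; constructor.
  - rewrite length_map; apply PeanoNat.Nat.eqb_eq, Hl.
  - apply Forall_map, H.
Qed.

Lemma clean_wf (t : T) : wf t -> clean t = t.
Proof.
  induction t using term_nested_ind; intros Hw; inversion Hw; subst; cbn; f_equal; auto.
  rewrite H2, PeanoNat.Nat.eqb_refl; f_equal.
  rewrite Forall_forall in *; rewrite <- map_id; apply map_ext_in; auto.
Qed.

Lemma clean_subst (sg : nat -> T) (l : T) :
  wf l -> clean (subst sg l) = subst (fun x => clean (sg x)) l.
Proof.
  induction l using term_nested_ind; intros Hw; inversion Hw; subst; cbn; f_equal; auto.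
  rewrite length_map, H2, PeanoNat.Nat.eqb_refl, map_map; f_equal.
  rewrite Forall_forall in *; apply map_ext_in; auto.
Qed.

Lemma clean_ctxc (r : relation T) :
  (forall s t, r s t -> r (clean s) (clean t)) ->
  forall s t, ctxc r s t -> clean s = clean t \/ ctxc r (clean s) (clean t).
Proof.
  intros Hr s t H; induction H; cbn; [right; apply cc_base, Hr; assumption | ..].
  all: try (destruct IHctxc as [IH|IH];
            [left; congruence | right; ctxc_ctor ltac:(exact IH)]).
  rewrite !length_app; cbn; destruct (Nat.eqb _ _); [|left; reflexivity].
  rewrite !map_app; cbn.
  destruct IHctxc as [IH|IH]; [left; congruence | right; apply cc_app, IH].
Qed.

Lemma clean_rroot (s t : T) : rroot E s t -> rroot E (clean s) (clean t).
Proof.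
  intros (l & r & sg & Hin & -> & ->).
  destruct HE as (_ & _ & Hrules & _); destruct (Hrules _ _ Hin) as (_ & Hwl & Hwr & _).
  exists l, r, (fun x => clean (sg x)); rewrite !clean_subst; auto.
Qed.

Lemma clean_acroot (s t : T) : acroot E s t -> acroot E (clean s) (clean t).
Proof.
  destruct HE as (Har & _).
  destruct 1 as [f|f|f]; cbn; rewrite (Har f) by assumption; cbn; constructor; assumption.
Qed.

Definition wf_conv : relation T :=
  clos_refl_sym_trans T (fun a b => wf a /\ wf b /\ (rstep E a b \/ ctxc (acroot E) a b)).

Lemma eqE_clean (s t : T) : eqE s t -> wf_conv (clean s) (clean t).
Proof.
  induction 1 as [s t [H|H]| | |]; try (econstructor; eassumption).
  - destruct (clean_ctxc _ clean_rroot _ _ H) as [e|e]; [rewrite e; apply rst_refl|].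
    apply rst_step; repeat split; auto using wf_clean.
  - destruct (clean_ctxc _ clean_acroot _ _ H) as [e|e]; [rewrite e; apply rst_refl|].
    apply rst_step; repeat split; auto using wf_clean.
Qed.

Definition rmods : relation T := clos_refl_trans T rmod.

Definition joinable (a b : T) : Prop :=
  exists u1 u2, rmods a u1 /\ rmods b u2 /\ aceq u1 u2.

Lemma rmods_aceq (u1 u2 v : T) :
  aceq u1 u2 -> rmods u1 v -> exists v', rmods u2 v' /\ aceq v v'.
Proof.
  intros Hu H; apply clos_rt_rt1n in H; destruct H as [|w v Hstep Hrest].
  - exists u2; split; [apply rt_refl | exact Hu].
  - exists v; split; [|apply rst_refl].
    apply rt_trans with w; [|apply clos_rt1n_rt, Hrest].
    destruct Hstep as (t' & s' & H1 & H2 & H3).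
    apply rt_step; exists t', s'; repeat split; auto.
    eapply rst_trans; [apply rst_sym, Hu | exact H1].
Qed.

Lemma wf_conv_joinable (a b : T) : wf_conv a b -> joinable a b.
Proof.
  intros H; apply clos_rst_rst1n in H.
  induction H as [x | x y z Hxy _ (u1 & u2 & Hy & Hz & Hu)].
  { exists x, x; repeat split; apply rt_refl || apply rst_refl. }
  destruct Hxy as [(Hwx & Hwy & [Hs|Hs]) | (Hwy & Hwx & [Hs|Hs])].
  - exists u1, u2; repeat split; auto.
    apply rt_trans with y; [apply rt_step | exact Hy].
    exists x, y; repeat split; auto; apply rst_refl.
  - destruct (rmods_aceq y x u1) as (v & Hv1 & Hv2); [apply rst_sym, rst_step, Hs | exact Hy|].
    exists v, u2; repeat split; auto; eapply rst_trans; [apply rst_sym, Hv2 | exact Hu].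
  - (* the only case that needs confluence: [x <- y ->* u1] *)
    destruct HE as (_ & _ & _ & _ & Hconf).
    assert (Hyx : rmods y x) by (apply rt_step; exists y, x; repeat split; auto; apply rst_refl).
    destruct (Hconf y x u1 Hwy Hyx Hy) as (v1 & v2 & Hv1 & Hv2 & Hv).
    destruct (rmods_aceq u1 u2 v2 Hu Hv2) as (v' & Hv'1 & Hv'2).
    exists v1, v'; repeat split; auto; [eapply rt_trans | eapply rst_trans]; eassumption.
  - destruct (rmods_aceq y x u1) as (v & Hv1 & Hv2); [apply rst_step, Hs | exact Hy|].
    exists v, u2; repeat split; auto; eapply rst_trans; [apply rst_sym, Hv2 | exact Hu].
Qed.

Lemma normal_rmods (a u : T) : normal a -> rmods a u -> u = a.
Proof.
  intros Hn H; apply clos_rt_rt1n in H; destruct H as [|b u Hab _]; [reflexivity|].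
  exfalso; apply Hn; exists b; exact Hab.
Qed.

Lemma eqE_normal_aceq (a b : T) :
  wf a -> wf b -> normal a -> normal b -> eqE a b -> aceq a b.
Proof.
  intros Wa Wb Na Nb H.
  apply eqE_clean in H; rewrite !clean_wf in H by assumption.
  destruct (wf_conv_joinable _ _ H) as (u1 & u2 & H1 & H2 & H3).
  rewrite (normal_rmods _ _ Na H1), (normal_rmods _ _ Nb H2) in H3; exact H3.
Qed.

End NormalForms.

Section AC.
Variable E : Etheory.
Notation T := (term (sym E)).

Lemma acstep_bapp f (X Y t : T) :
  ctxc (acroot E) (bapp f X Y) t \/ ctxc (acroot E) t (bapp f X Y) ->
  exists A1 A2, t = bapp f A1 A2 /\ aceq X A1 /\ aceq Y A2.
Proof.
  (* AC root steps only relate App-headed terms, so the step happens below [f] *)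
  intros [H|H]; remember (bapp f X Y) as s eqn:Hs; destruct H as [a b H| | | | | | | | | |];
    try (destruct H; destruct f; discriminate);
    destruct f; try discriminate Hs; injection Hs as <- <-;
    do 2 eexists; (split; [reflexivity|]); split;
    first [apply rst_refl | apply rst_step; assumption | apply rst_sym, rst_step; assumption].
Qed.

Lemma aceq_bapp f (X Y A : T) :
  aceq (bapp f X Y) A -> exists A1 A2, A = bapp f A1 A2 /\ aceq X A1 /\ aceq Y A2.
Proof.
  intros H; apply clos_rst_rst1n in H; remember (bapp f X Y) as s eqn:Hs; revert X Y Hs.
  induction H as [|s t u Hst _ IH]; intros X Y ->.
  - exists X, Y; repeat split; apply rst_refl.
  - destruct (acstep_bapp f X Y t Hst) as (B1 & B2 & -> & H1 & H2).
    destruct (IH B1 B2 eq_refl) as (A1 & A2 & -> & H3 & H4).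
    exists A1, A2; repeat split; eapply rst_trans; eassumption.
Qed.

End AC.

Section Collapse.
Variable E : Etheory.
Hypothesis HE : E_ok E.
Notation T := (term (sym E)).
Variable U : T -> Prop.
Variable w0 : T.

Definition eqE_in (t : T) : Prop := exists r, U r /\ eqE t r.

Lemma eqE_in_eqE (s t : T) : eqE s t -> eqE_in s -> eqE_in t.
Proof.
  intros H (r & Hr & Hs); exists r; split; [exact Hr|].
  eapply rst_trans; [apply rst_sym, H | exact Hs].
Qed.

Definition guard_or (t r : T) : T :=
  if excluded_middle_informative (eqE_in t) then w0 else r.

(* Outermost guarded subterms E-equal to a member of [U] are replaced by [w0].  Rules
   and AC axioms are built from Sigma_E only, so every E-step either happens inside a
   replaced subterm or commutes with [collapse]. *)
Fixpoint collapse (t : T) : T :=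
  match t with
  | Nm a => guard_or t (Nm a)
  | Vr x => guard_or t (Vr x)
  | Pub u => guard_or t (Pub (collapse u))
  | Sign u v => guard_or t (Sign (collapse u) (collapse v))
  | Blind u v => guard_or t (Blind (collapse u) (collapse v))
  | Pair u v => guard_or t (Pair (collapse u) (collapse v))
  | Enc u v => guard_or t (Enc (collapse u) (collapse v))
  | App f l => App f (map collapse l)
  end.

Lemma guard_or_eqE (t t' r r' : T) :
  eqE t t' -> eqE r r' -> eqE (guard_or t r) (guard_or t' r').
Proof.
  intros Ht Hr; unfold guard_or.
  destruct (excluded_middle_informative (eqE_in t)) as [H|H];
  destruct (excluded_middle_informative (eqE_in t')) as [H'|H'];
    [apply rst_refl | | | exact Hr]; exfalso.
  - exact (H' (eqE_in_eqE _ _ Ht H)).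
  - exact (H (eqE_in_eqE _ _ (rst_sym _ _ _ _ Ht) H')).
Qed.

Lemma collapse_subst P (sg : nat -> T) (l : T) :
  eterm E P l -> collapse (subst sg l) = subst (fun x => collapse (sg x)) l.
Proof.
  induction l using term_nested_ind; intros He; inversion He; subst; cbn; [reflexivity|].
  f_equal; rewrite map_map; apply map_ext_in; intros a Ha.
  rewrite Forall_forall in *; auto.
Qed.

Lemma collapse_ctxc (r : relation T) :
  (forall s t, r s t -> eqE (collapse s) (collapse t)) ->
  (forall s t, ctxc r s t -> eqE s t) ->
  forall s t, ctxc r s t -> eqE (collapse s) (collapse t).
Proof.
  intros Hroot Hstep s t H; induction H; [auto | ..].
  all: try (cbn [collapse]; apply guard_or_eqE;
            [ apply Hstep; ctxc_ctor assumption
            | apply eqE_congr; ctxc_ctor ltac:(apply cc_base, IHctxc) ]).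
  cbn [collapse]; rewrite !map_app; cbn [map].
  apply eqE_congr, cc_app, cc_base, IHctxc.
Qed.

Lemma collapse_eqE (s t : T) : eqE s t -> eqE (collapse s) (collapse t).
Proof.
  destruct HE as (_ & _ & Hrules & _).
  induction 1 as [s t [H|H]| | |].
  - apply (collapse_ctxc (rroot E)); [| intros a b Hab; apply rst_step; left; exact Hab | exact H].
    intros a b (l & r & sg & Hin & -> & ->).
    destruct (Hrules _ _ Hin) as ((i & Hl & Hr) & _).
    rewrite (collapse_subst _ _ _ Hl), (collapse_subst _ _ _ Hr).
    apply rst_step; left; apply cc_base; exists l, r, (fun x => collapse (sg x)); auto.
  - apply (collapse_ctxc (acroot E)); [| intros a b Hab; apply rst_step; right; exact Hab | exact H].
    intros a b Hab; destruct Hab; apply rst_step; right; apply cc_base; constructor; assumption.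
  - apply rst_refl.
  - apply rst_sym; assumption.
  - eapply rst_trans; eassumption.
Qed.

Lemma collapse_id (t : T) :
  (forall A, guarded A -> subterm A t -> ~ eqE_in A) -> collapse t = t.
Proof.
  induction t using term_nested_ind; intros Hg; cbn [collapse].
  8: { f_equal; rewrite <- map_id; apply map_ext_in; intros a Ha.
       rewrite Forall_forall in H; apply H; [exact Ha|].
       intros A HA Hs; apply Hg; [exact HA | eapply st_app; eassumption]. }
  all: unfold guard_or; destruct (excluded_middle_informative _) as [Hb|_];
    first [exfalso; eapply Hg; [| apply st_refl | exact Hb]; exact I | f_equal].
  all: match goal with IH : (forall A, guarded A -> subterm A ?u -> _) -> collapse ?u = ?u
                       |- collapse ?u = ?u => apply IH end.
  all: intros A HA Hs; apply (Hg A HA); constructor; exact Hs.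
Qed.

Lemma collapse_hit (t : T) : guarded t -> eqE_in t -> collapse t = w0.
Proof.
  intros Hg Hb; destruct t; try contradiction; cbn [collapse]; unfold guard_or;
    destruct (excluded_middle_informative _); first [reflexivity | contradiction].
Qed.

End Collapse.

Section Transfer.
Variable E : Etheory.
Hypothesis HE : E_ok E.
Notation T := (term (sym E)).

Definition covered (D : list T) (t : T) : Prop :=
  exists f X Y, t = bapp f X Y /\ In X D /\ In Y D.

Definition covers (D G : list T) : Prop := forall t, In t G -> In t D \/ covered D t.

Definition repr (D : list T) (r : T) : Prop := exists a, In a D /\ eqE a r.

Lemma covered_incl (D D' : list T) t : incl D D' -> covered D t -> covered D' t.
Proof. intros H (f & X & Y & -> & HX & HY); exists f, X, Y; auto. Qed.

Lemma covers_app_r (D G G1 : list T) : incl G1 D -> covers D G -> covers D (G1 ++ G).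
Proof. intros H1 H t Ht; apply in_app_or in Ht as [Ht|Ht]; auto. Qed.

Lemma covers_incl (D D' G : list T) : incl D D' -> covers D G -> covers D' G.
Proof.
  intros HD H t Ht; destruct (H t Ht) as [Hin|Hc]; [left; auto | right; eapply covered_incl; eauto].
Qed.

Lemma covers_covered (D G : list T) t : covered D t -> covers D G -> covers D (t :: G).
Proof. intros Ht H u [<-|Hu]; auto. Qed.

Lemma der_wfseq cut (G : list T) N : der E cut G N -> wfseq E G N.
Proof. destruct 1; assumption. Qed.

Lemma wfseq_ctx (D G : list T) N : Forall (okterm E) D -> wfseq E G N -> wfseq E D N.
Proof. intros HD [_ HN]; split; assumption. Qed.

Lemma der_eqE_member (G : list T) X A :
  In X G -> Forall (okterm E) G -> okterm E A -> eqE A X -> der E false G A.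
Proof.
  intros Hin Hok HA Heq; apply d_id; [split; assumption|].
  exists (Vr 0), (fun _ => X); repeat split; [constructor | constructor | | exact Heq].
  intros; exact Hin.
Qed.

(* A normal form E-equal to [bapp f X Y] is AC-equal to it, hence is itself of the
   form [bapp f A1 A2] and is built by the right rule of [f] from [A1 =E X], [A2 =E Y]. *)
Lemma der_eqE_covered (D : list T) A r :
  Forall (okterm E) D -> okterm E A -> covered D r -> okterm E r -> eqE A r ->
  der E false D A.
Proof.
  intros Hok HA (f & X & Y & -> & HX & HY) Hr Heq.
  pose proof HA as (_ & Wa & Na); pose proof Hr as (_ & Wr & Nr).
  destruct (aceq_bapp E f X Y A) as (A1 & A2 & -> & H1 & H2).
  { apply eqE_normal_aceq; auto; apply rst_sym, Heq. }
  destruct (okterm_bapp E _ _ _ HA) as [Ok1 Ok2].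
  destruct (okterm_bapp E _ _ _ Hr) as [OkX OkY].
  assert (D1 : der E false D A1)
    by (apply (der_eqE_member D X); auto; apply rst_sym, aceq_eqE, H1).
  assert (D2 : der E false D A2)
    by (apply (der_eqE_member D Y); auto; apply rst_sym, aceq_eqE, H2).
  destruct f; constructor; auto; split; auto.
Qed.

Definition representative (D : list T) (t : T) : T :=
  match excluded_middle_informative (repr D t) with
  | left H => proj1_sig (constructive_indefinite_description _ H)
  | right _ => t
  end.

Lemma representative_spec (D : list T) t :
  eqE t (representative D t) /\
  (In (representative D t) D \/ ~ repr D t /\ representative D t = t).
Proof.
  unfold representative; destruct (excluded_middle_informative (repr D t)) as [H|H].
  - destruct (constructive_indefinite_description _ H) as (a & Ha & Heq); cbn.
    split; [apply rst_sym, Heq | left; exact Ha].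
  - split; [apply rst_refl | right; auto].
Qed.

Section IdAxiom.
Variables (G : list T) (M C : T) (sg : nat -> T).
Hypothesis HGM : wfseq E G M.
Hypothesis HC : ectx C.
Hypothesis Hsg : forall x, occurs x C -> In (sg x) G.
Hypothesis HM : eqE M (subst sg C).

Definition unrepresented (D : list T) (r : T) : Prop := In r G /\ ~ repr D r.

Definition exposed (D : list T) : Prop :=
  exists A B r, guarded A /\ (In B D \/ B = M) /\ subterm A B /\
    unrepresented D r /\ eqE A r.

(* Move every hypothesis of [G] to a representative in [D] when it has one; the
   remaining ones are covered but not E-equal to anything guarded in [D, M], so
   collapsing them to a fixed member of [D] leaves [D] and [M] unchanged. *)
Lemma der_id_unexposed (D : list T) :
  Forall (okterm E) D -> covers D G -> ~ exposed D -> der E false D M.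
Proof.
  intros Hok Hcov Hnx.
  set (U := unrepresented D); set (w0 := hd (Nm 0) D).
  set (sg1 := fun x => representative D (sg x)).
  assert (Hfix : forall B, In B D \/ B = M -> collapse E U w0 B = B).
  { intros B HB; apply collapse_id; intros A HA HAB (r & Hr & HAr).
    apply Hnx; exists A, B, r; auto. }
  assert (HM1 : eqE M (subst (fun x => collapse E U w0 (sg1 x)) C)).
  { rewrite <- (Hfix M (or_intror eq_refl)), <- (collapse_subst E U w0 _ sg1 C (proj2 HC)).
    apply (collapse_eqE E HE), (rst_trans _ _ _ _ _ HM), eqE_subst.
    intros x; apply representative_spec. }
  apply d_id; [exact (wfseq_ctx D G M Hok HGM)|].
  exists C, (fun x => collapse E U w0 (sg1 x)); repeat split; [apply HC.. | | exact HM1].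
  intros x Hx; destruct (proj2 (representative_spec D (sg x))) as [Hin | (Hnr & Heq)].
  { rewrite Hfix; auto. }
  assert (HU : U (sg1 x)) by (unfold sg1; rewrite Heq; split; auto).
  destruct (Hcov _ (proj1 HU)) as [Hin|Hc].
  { exfalso; apply (proj2 HU); exists (sg1 x); split; [exact Hin | apply rst_refl]. }
  destruct Hc as (f & X & Y & Hf & HX & _).
  rewrite collapse_hit;
    [| rewrite Hf; destruct f; exact I | exists (sg1 x); split; [exact HU | apply rst_refl]].
  destruct D; [contradiction | left; reflexivity].
Qed.

(* [L] lists the hypotheses of [G] still without a representative in [D]; each (gs)
   step gives one of them a representative. *)
Lemma der_id_covers n : forall (L D : list T), length L <= n ->
  Forall (okterm E) D -> covers D G -> (forall t, In t G -> repr D t \/ In t L) ->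
  der E false D M.
Proof.
  induction n as [|n IH]; intros L D HL Hok Hcov HGL;
    (destruct (classic (exposed D)) as [(A & B & r & HA & HB & HAB & (Hr & Hnr) & HAr)|Hnx];
     [destruct (HGL r Hr) as [|HrL]; [contradiction|] | exact (der_id_unexposed D Hok Hcov Hnx)]).
  { destruct L; [contradiction | inversion HL]. }
  destruct (in_split _ _ HrL) as (L1 & L2 & ->).
  destruct HGM as [HG HM'].
  assert (OkB : okterm E B)
    by (destruct HB as [HB | <-]; [rewrite Forall_forall in Hok; auto | exact HM']).
  assert (OkA : okterm E A) by (eapply subterm_okterm; eassumption).
  assert (Okr : okterm E r) by (rewrite Forall_forall in HG; auto).
  assert (Hrc : covered D r).
  { destruct (Hcov r Hr) as [Hin|Hc]; [|exact Hc].
    exfalso; apply Hnr; exists r; split; [exact Hin | apply rst_refl]. }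
  apply d_gs with A; [split; assumption | exact HA | exists B; auto | |].
  - exact (der_eqE_covered D A r Hok OkA Hrc Okr HAr).
  - apply (IH (L1 ++ L2)); [rewrite length_app in *; cbn in HL; lia | constructor; assumption | |].
    + apply covers_incl with D; [intros a Ha; right; exact Ha | exact Hcov].
    + intros t Ht; destruct (HGL t Ht) as [(a & Ha & Hat) | Hin].
      * left; exists a; split; [right; exact Ha | exact Hat].
      * apply in_app_or in Hin as [Hin | [<- | Hin]].
        -- right; apply in_or_app; auto.
        -- left; exists A; split; [left; reflexivity | exact HAr].
        -- right; apply in_or_app; auto.
Qed.

End IdAxiom.

Definition transfers (G : list T) (N : T) : Prop :=
  forall D, Forall (okterm E) D -> covers D G -> der E false D N.

Lemma covered_bapp_inv f (X Y : T) D : covered D (bapp f X Y) -> In X D /\ In Y D.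
Proof.
  intros (g & X' & Y' & Heq & HX & HY).
  destruct f, g; try discriminate Heq; injection Heq as -> ->; auto.
Qed.

Lemma transfers_app (G1 G D : list T) N :
  der E false (G1 ++ G) N -> transfers (G1 ++ G) N ->
  Forall (okterm E) D -> covers D G -> der E false (G1 ++ D) N.
Proof.
  intros Hd IH Hok Hcov; apply IH.
  - pose proof (proj1 (der_wfseq _ _ _ Hd)) as HF.
    apply Forall_app in HF as [Hok1 _]; apply Forall_app; auto.
  - apply covers_app_r; [apply incl_appl, incl_refl|].
    apply covers_incl with D; [apply incl_appr, incl_refl | exact Hcov].
Qed.

Lemma transfers_gs (G : list T) A N :
  wfseq E G N -> guarded A -> (exists B, (In B G \/ B = N) /\ subterm A B) ->
  der E false (A :: G) N -> transfers G A -> transfers (A :: G) N -> transfers G N.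
Proof.
  intros Hw HA (B & HB & HAB) Hd IH1 IH2 D Hok Hcov.
  assert (Hgs : forall B', In B' D \/ B' = N -> subterm A B' -> der E false D N).
  { intros B' HB' HAB'; apply d_gs with A; [exact (wfseq_ctx D G N Hok Hw) | exact HA | eauto | |].
    - apply IH1; assumption.
    - apply (transfers_app [A] G D N); assumption. }
  destruct HB as [HB | ->]; [| apply (Hgs N); auto].
  destruct (Hcov _ HB) as [HBD | (f & X & Y & -> & HX & HY)]; [apply (Hgs B); auto|].
  destruct (subterm_bapp_inv E f A X Y HAB) as [-> | [HAX | HAY]].
  - apply IH2; [exact Hok | apply covers_covered; [exists f, X, Y |]; auto].
  - apply (Hgs X); auto.
  - apply (Hgs Y); auto.
Qed.

Lemma transfers_blindL2 (G : list T) M R K N :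
  wfseq E G N -> In (Sign (Blind M R) K) G ->
  der E false (Sign M K :: R :: G) N ->
  transfers G R -> transfers (Sign M K :: R :: G) N -> transfers G N.
Proof.
  intros Hw Hin Hd IH1 IH2 D Hok Hcov.
  destruct (Hcov _ Hin) as [HinD | Hc].
  { apply d_blindL2 with M R K; [apply (wfseq_ctx D G N Hok Hw) | exact HinD | auto |].
    apply (transfers_app [Sign M K; R] G D N); assumption. }
  (* [Blind M R] and [K] are in [D]: (blind_L1) yields [M], which covers [Sign M K] *)
  destruct (covered_bapp_inv BSign (Blind M R) K D Hc) as [HBlind HK].
  apply d_blindL1 with M R; [apply (wfseq_ctx D G N Hok Hw) | exact HBlind | auto |].
  destruct (der_wfseq _ _ _ Hd) as [HF _]; inversion HF as [|? ? _ HF']; inversion HF'.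
  apply IH2; [constructor; [|constructor]; auto|].
  - rewrite Forall_forall in Hok; apply (okterm_bapp E BBlind M R), Hok, HBlind.
  - apply covers_covered; [exists BSign, M, K; cbn; auto|].
    apply covers_app_r with (G1 := [R]); [intros a [<-|[]]; cbn; auto|].
    apply covers_incl with D; [intros a Ha; cbn; auto | exact Hcov].
Qed.

Lemma der_transfers (G : list T) N : der E false G N -> transfers G N.
Proof.
  induction 1 as
    [G N Hw (C & sg & HC & Hsg & HN) | G M N Hcut | G M N P Hw Hin Hd IH
    | G M N Hw _ IH1 _ IH2 | G M K N Hw Hin _ IH1 Hd IH2 | G M K Hw _ IH1 _ IH2
    | G M K L N Hw Hin HL HKL Hd IH | G M K Hw _ IH1 _ IH2 | G M K N Hw Hin _ IH1 Hd IH2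
    | G M K Hw _ IH1 _ IH2 | G M R K N Hw Hin _ IH1 Hd IH2 | G A N Hw HA HB _ IH1 Hd IH2];
    try discriminate Hcut; intros D Hok Hcov.
  - apply (der_id_covers G N C sg Hw HC Hsg HN (length G) G D); auto.
  - destruct (Hcov _ Hin) as [HinD | Hc].
    + apply d_pL with M N; [apply (wfseq_ctx D G P Hok Hw) | exact HinD |].
      apply (transfers_app [M; N] G D P); assumption.
    + destruct (covered_bapp_inv BPair M N D Hc); apply IH; auto.
      apply (covers_app_r D G [M; N]); [intros a [<-|[<-|[]]] |]; auto.
  - apply d_pR; [apply (wfseq_ctx D G _ Hok Hw) | apply IH1 | apply IH2]; auto.
  - destruct (Hcov _ Hin) as [HinD | Hc].
    + apply d_eL with M K; [apply (wfseq_ctx D G N Hok Hw) | exact HinD | auto |].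
      apply (transfers_app [M; K] G D N); assumption.
    + destruct (covered_bapp_inv BEnc M K D Hc); apply IH2; auto.
      apply (covers_app_r D G [M; K]); [intros a [<-|[<-|[]]] |]; auto.
  - apply d_eR; [apply (wfseq_ctx D G _ Hok Hw) | apply IH1 | apply IH2]; auto.
  - assert (HLD : In (Pub L) D).
    { destruct (Hcov _ HL) as [? | (f & ? & ? & Hf & _)]; [assumption | destruct f; discriminate]. }
    destruct (Hcov _ Hin) as [HinD | Hc].
    + apply d_signL with M K L; [apply (wfseq_ctx D G N Hok Hw) | exact HinD | exact HLD | exact HKL |].
      apply (transfers_app [M] G D N); assumption.
    + destruct (covered_bapp_inv BSign M K D Hc); apply IH; auto.
      apply (covers_app_r D G [M]); [intros a [<-|[]] |]; auto.
  - apply d_signR; [apply (wfseq_ctx D G _ Hok Hw) | apply IH1 | apply IH2]; auto.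
  - destruct (Hcov _ Hin) as [HinD | Hc].
    + apply d_blindL1 with M K; [apply (wfseq_ctx D G N Hok Hw) | exact HinD | auto |].
      apply (transfers_app [M; K] G D N); assumption.
    + destruct (covered_bapp_inv BBlind M K D Hc); apply IH2; auto.
      apply (covers_app_r D G [M; K]); [intros a [<-|[<-|[]]] |]; auto.
  - apply d_blindR; [apply (wfseq_ctx D G _ Hok Hw) | apply IH1 | apply IH2]; auto.
  - exact (transfers_blindL2 G M R K N Hw Hin Hd IH1 IH2 D Hok Hcov).
  - exact (transfers_gs G A N Hw HA HB Hd IH1 IH2 D Hok Hcov).
Qed.

End Transfer.

Theorem lemma2 (E : Etheory) (HE : E_ok E) (f : bcons)
  (G : list (term (sym E))) (X Y M : term (sym E)) :
  normal X -> normal Y ->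
  cf_derivable (bapp f X Y :: G) M ->
  cf_derivable (X :: Y :: G) M.
Proof.
  intros _ _ H.
  destruct (der_wfseq E _ _ _ H) as [HF _]; inversion HF as [|? ? Hf HG]; subst.
  destruct (okterm_bapp E _ _ _ Hf) as [HX HY].
  apply (der_transfers E HE _ _ H); [constructor; [|constructor]; assumption|].
  apply covers_covered; [exists f, X, Y; cbn; auto|].
  intros t Ht; left; right; right; exact Ht.
Qed.
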